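(* Let $k, m, \nu, d$ be positive integers and let $t \in \mathbb{R}$. Suppose $\tilde{\bm{c}} = \tilde{\bm{c}}(\bm{\theta}) \in \mathbb{R}^k$, $\tilde{\bm{A}} = \tilde{\bm{A}}(\bm{\theta}) \in \mathbb{R}^{m\times k}$ and $\tilde{\bm{b}} = \tilde{\bm{b}}(\bm{\theta}) \in \mathbb{R}^m$ are such that every entry of each of them is a real polynomial of degree at most $d$ in $\nu$ real variables $\bm{\theta} \in \mathbb{R}^\nu$. Assume that for every $\bm{\theta} \in \mathbb{R}^\nu$ the linear program $\max\{\tilde{\bm{c}}^\top \bm{y} : \tilde{\bm{A}}\bm{y} \le \tilde{\bm{b}},\ \bm{y}\in\mathbb{R}^k\}$ is feasible and bounded. Then there exist at most $\binom{m+2k}{2k}(m+2k+2)$ real polynomials $p_1,\dots,p_L$ in $\bm{\theta}$, each of degree at most $(2k+1)d$, with the following property: for any $\bm{\theta}, \bm{\theta}' \in \mathbb{R}^\nu$ such that $\operatorname{sign}(p_j(\bm{\theta})) = \operatorname{sign}(p_j(\bm{\theta}'))$ for all $j = 1,\dots,L$ (where the sign takes values in $\{<0, =0, >0\}$), the statement $\max\{\tilde{\bm{c}}(\bm{\theta})^\top \bm{y} : \tilde{\bm{A}}(\bm{\theta})\bm{y} \le \tilde{\bm{b}}(\bm{\theta})\} \ge t$ holds if and only if $\max\{\tilde{\bm{c}}(\bm{\theta}')^\top \bm{y} : \tilde{\bm{A}}(\bm{\theta}')\bm{y} \le \tilde{\bm{b}}(\bm{\theta}')\} \ge t$ holds.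
   Context: Vector inequalities are entrywise. *)

From HB Require Import structures.
From mathcomp Require Import all_boot all_order all_algebra.
From mathcomp Require Import classical_sets reals.
From mathcomp Require Import mpoly.
Set Implicit Arguments. Unset Strict Implicit. Unset Printing Implicit Defensive.
Import Order.TTheory GRing.Theory Num.Theory.
Local Open Scope ring_scope.

Section LP.
Variables (R : realType) (nu m k : nat).

Definition lp_feasible (A : 'I_m -> 'I_k -> {mpoly R[nu]}) (b : 'I_m -> {mpoly R[nu]})
  (theta : 'I_nu -> R) (y : 'I_k -> R) : Prop :=
  forall i : 'I_m, \sum_(j < k) (A i j).@[theta] * y j <= (b i).@[theta].

Definition lp_obj (c : 'I_k -> {mpoly R[nu]}) (theta : 'I_nu -> R) (y : 'I_k -> R) : R :=
  \sum_(j < k) (c j).@[theta] * y j.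

Definition lp_value c A b (theta : 'I_nu -> R) : R :=
  sup [set lp_obj c theta y | y in [set y | lp_feasible A b theta y]]%classic.

Definition lp_feasible_bounded c A b (theta : 'I_nu -> R) : Prop :=
  (exists y, lp_feasible A b theta y) /\
  (exists M : R, forall y, lp_feasible A b theta y -> lp_obj c theta y <= M).
End LP.

(* Writing y = u - v with u, v >= 0 turns the program into max w x subject to P x <= q, with
   n = 2k variables and N = m + 2k constraints, where P contains -I and so has trivial kernel.
   A bounded program of this kind attains its supremum at a basic solution
   x_S = P_S^-1 q_S, S an n-set of constraints with P_S invertible: the ratio test moves any
   feasible point, without decreasing the objective, until the active constraints determine it.
   By Cramer's rule x_S = adj(P_S) q_S / det P_S, so whether x_S is feasible with objective at
   least t is decided by the signs of det P_S, of the N slacks (P adj(P_S) q_S)_i - det P_S q_i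
   and of w adj(P_S) q_S - t det P_S: N + 2 polynomials of degree at most (n + 1) d for each of
   the 'C(N, n) sets S. *)

From mathcomp Require Import all_boot all_order all_algebra.
From mathcomp Require Import boolp classical_sets reals.
From mathcomp Require Import mpoly.
From mathcomp Require Import ring lra zify.
Set Implicit Arguments. Unset Strict Implicit. Unset Printing Implicit Defensive.
Import Order.TTheory GRing.Theory Num.Theory.
Local Open Scope ring_scope.

Lemma row_full_ker0 (F : fieldType) p r (M : 'M[F]_(p, r)) :
  (forall z : 'cV_r, M *m z = 0 -> z = 0) -> row_full M.
Proof.
move=> ker0; rewrite /row_full -mxrank_tr; apply: inj_row_free => v.
move=> /(congr1 trmx); rewrite trmx_mul trmxK trmx0 => /ker0 /(congr1 trmx).
by rewrite trmxK trmx0.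
Qed.

Lemma rowsub_mulmx_entry (T : pzRingType) p p' r (M : 'M[T]_(p, r)) (f : 'I_p' -> 'I_p)
    (z : 'cV_r) j :
  (rowsub f M *m z) j 0 = (M *m z) (f j) 0.
Proof. by rewrite mul_rowsub_mx mxE. Qed.

Lemma sorted_rowsub_unit (F : fieldType) p r (M : 'M[F]_(p, r)) (f : 'I_r -> 'I_p) :
  injective f -> rowsub f M \in unitmx ->
  exists s : r.-tuple 'I_p,
    [/\ sorted ltn (map val s), rowsub (tnth s) M \in unitmx & forall j, tnth s j \in codom f].
Proof.
move=> f_inj f_unit.
pose s := sort_tuple (fun a b : 'I_p => val a <= val b)%N [tuple f j | j < r].
have mem_s i : (i \in s) = (i \in codom f) by rewrite mem_sort.
exists s; split.
- rewrite ltn_sorted_uniq_leq (map_inj_uniq val_inj) sort_uniq.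
  rewrite (map_inj_uniq f_inj) enum_uniq sorted_map /=.
  by apply: sort_sorted => a b; exact: leq_total.
- rewrite -row_full_unit; apply: row_full_ker0 => z sz.
  suff /(congr1 (mulmx (invmx (rowsub f M)))) : rowsub f M *m z = 0.
    by rewrite mulKmx // mulmx0.
  apply/colP => j; rewrite rowsub_mulmx_entry [RHS]mxE.
  have /tnthP [j' ->] : f j \in s by rewrite mem_s codom_f.
  by rewrite -(rowsub_mulmx_entry _ (tnth s)) sz mxE.
- by move=> j; rewrite -mem_s mem_tnth.
Qed.

Lemma sgr_subM (R : realFieldType) (d a z : R) : d != 0 ->
  Num.sg (a - d * z) * Num.sg d = Num.sg (d^-1 * a - z).
Proof.
move=> d0; have dd_gt0 : 0 < d * d by rewrite -expr2 exprn_even_gt0 //= d0 orbT.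
rewrite -sgrM (_ : _ * d = d * d * (d^-1 * a - z)); last by field.
by rewrite sgrM gtr0_sg // mul1r.
Qed.

Lemma sgr_subM_le0 (R : realFieldType) (d a z : R) : d != 0 ->
  (Num.sg (a - d * z) * Num.sg d <= 0) = (d^-1 * a <= z).
Proof. by move=> d0; rewrite sgr_subM // sgr_le0 subr_le0. Qed.

Lemma sgr_subM_ge0 (R : realFieldType) (d a z : R) : d != 0 ->
  (0 <= Num.sg (a - d * z) * Num.sg d) = (z <= d^-1 * a).
Proof. by move=> d0; rewrite sgr_subM // sgr_ge0 subr_ge0. Qed.

Section LinearProgram.
Variables (R : realFieldType) (n N : nat).
Variables (P : 'M[R]_(N, n)) (q : 'cV[R]_N) (w : 'rV[R]_n).
Implicit Types (x z : 'cV[R]_n) (s : n.-tuple 'I_N).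

Definition feasible x := forall i, (P *m x) i 0 <= q i 0.
Definition active x i := (P *m x) i 0 == q i 0.
Definition objective x := (w *m x) 0 0.
Definition tangent x z := forall i, active x i -> (P *m z) i 0 = 0.
Definition vertex x := forall z, tangent x z -> z = 0.
Definition basic_solution s := invmx (rowsub (tnth s) P) *m rowsub (tnth s) q.

Lemma mulmxDZ_entry p (M : 'M[R]_(p, n)) x a z i :
  (M *m (x + a *: z)) i 0 = (M *m x) i 0 + a * (M *m z) i 0.
Proof. by rewrite mulmxDr -scalemxAr !mxE. Qed.

Lemma objectiveDZ x a z : objective (x + a *: z) = objective x + a * objective z.
Proof. exact: mulmxDZ_entry. Qed.

Lemma objectiveN z : objective (- z) = - objective z.
Proof. by rewrite /objective mulmxN mxE. Qed.

Lemma tangentN x z : tangent x z -> tangent x (- z).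
Proof. by move=> tz i /tz Pzi; rewrite mulmxN mxE Pzi oppr0. Qed.

Hypothesis P_inj : forall z, P *m z = 0 -> z = 0.
Hypothesis objective_bounded : exists M, forall x, feasible x -> objective x <= M.

Lemma mulmx_entry_neq0 z : z != 0 -> exists i, (P *m z) i 0 != 0.
Proof.
move=> z_neq0; apply/existsP; apply: contraR z_neq0 => /existsPn Pz0.
apply/eqP/P_inj/colP => i; rewrite [RHS]mxE; exact/eqP/negPn.
Qed.

(* If no constraint blocked the direction [z], the objective would be unbounded along [x + a z]. *)
Lemma ascent_blocked x z : feasible x -> 0 < objective z -> exists i, 0 < (P *m z) i 0.
Proof.
move=> fx oz; apply/existsP; apply: contraT => /existsPn Pz_le0.
have [M objM] := objective_bounded.
pose a := (`|M - objective x| + 1) / objective z.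
have a_ge0 : 0 <= a by apply: divr_ge0; [apply: addr_ge0 | apply: ltW].
have : feasible (x + a *: z).
  move=> i; rewrite mulmxDZ_entry.
  have : a * (P *m z) i 0 <= 0 by rewrite mulr_ge0_le0 // leNgt (negbTE (Pz_le0 i)).
  have := fx i; lra.
move/objM; rewrite objectiveDZ /a divfK ?gt_eqF //.
have := ler_norm (M - objective x); lra.
Qed.

Lemma ascent_direction x z : feasible x -> z != 0 -> tangent x z ->
  exists z', [/\ tangent x z', 0 <= objective z' & exists i, 0 < (P *m z') i 0].
Proof.
move=> fx; wlog oz : z / 0 <= objective z.
  move=> hwlog z_neq0 tz; have [oz|oz] := lerP 0 (objective z); first exact: hwlog oz z_neq0 tz.
  apply: (hwlog (- z)); last exact: tangentN.
    by rewrite objectiveN oppr_ge0 ltW.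
  by rewrite oppr_eq0.
move=> z_neq0 tz; have [oz0|oz_gt0] := eqVneq (objective z) 0; last first.
  by exists z; split => //; apply: (ascent_blocked fx); rewrite lt_def oz_gt0.
have [i Pzi] := mulmx_entry_neq0 z_neq0.
have [Pzi_lt0|Pzi_gt0|Pzi0] := ltgtP ((P *m z) i 0) 0; last by rewrite Pzi0 eqxx in Pzi.
- exists (- z); split; rewrite ?objectiveN ?oz0 ?oppr0 //; first exact: tangentN.
  by exists i; rewrite mulmxN mxE oppr_gt0.
- by exists z; split => //; exists i.
Qed.

(* Ratio test: move along an ascent direction until the first inactive constraint becomes active. *)
Lemma pivot x : feasible x -> ~ vertex x ->
  exists x', [/\ feasible x', objective x <= objective x',
    (forall i, active x i -> active x' i) & exists i, active x' i && ~~ active x i].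
Proof.
move=> fx notv.
have [z [tz z_neq0]] : exists z, tangent x z /\ z != 0.
  apply: (contra_notP _ notv) => no_z z tz; apply/eqP; apply: (contra_notP _ no_z) => z_neq0.
  by exists z; split => //; apply/negP.
have [d [td od [i1 Pdi1]]] := ascent_direction fx z_neq0 tz.
pose ratio i := (q i 0 - (P *m x) i 0) / (P *m d) i 0.
have [i0 Pdi0 ratio_min] := arg_minP ratio (P := fun i => 0 < (P *m d) i 0) Pdi1.
pose a := ratio i0.
have a_ge0 : 0 <= a by apply: divr_ge0; [rewrite subr_ge0; exact: fx | exact: ltW].
exists (x + a *: d); split.
- move=> j; rewrite mulmxDZ_entry.
  have [Pdj_gt0|Pdj_le0] := ltP 0 ((P *m d) j 0).
    by have := ratio_min j Pdj_gt0; rewrite /= -/a /ratio ler_pdivlMr //; lra.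
  have := fx j; have : a * (P *m d) j 0 <= 0 by rewrite mulr_ge0_le0.
  lra.
- by rewrite objectiveDZ lerDl mulr_ge0.
- by move=> i ai; rewrite /active mulmxDZ_entry (td _ ai) mulr0 addr0.
- exists i0; apply/andP; split.
    rewrite /active mulmxDZ_entry /a /ratio divfK; last exact: lt0r_neq0.
    by rewrite addrC subrK.
  by apply: contraTN Pdi0 => /td ->; rewrite ltxx.
Qed.

Lemma exists_dominating_vertex x : feasible x ->
  exists x', [/\ feasible x', objective x <= objective x' & vertex x'].
Proof.
have [r] := ubnP #|[set i | ~~ active x i]|.
elim: r x => // r IHr x inactive_lt fx.
have [vx|notv] := asboolP (vertex x); first by exists x; split.
have [x' [fx' ox sub [i0 /andP [ai0' nai0]]]] := pivot fx notv.
have card_lt : (#|[set i | ~~ active x' i]| < #|[set i | ~~ active x i]|)%N.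
  apply: proper_card; apply/properP; split.
    by apply/fintype.subsetP => i; rewrite !inE; apply: contra; exact: sub.
  by exists i0; rewrite !inE ?ai0'.
have [x'' [fx'' ox' vx'']] := IHr x' (leq_trans card_lt inactive_lt) fx'.
by exists x''; split => //; exact: le_trans ox'.
Qed.

Definition active_rows x := diag_mx (\row_i (active x i)%:R) *m P.

Lemma active_rowsE x i j : active_rows x i j = (active x i)%:R * P i j.
Proof. by rewrite /active_rows mul_diag_mx !mxE. Qed.

Lemma active_rows_mulmx x z i : (active_rows x *m z) i 0 = (active x i)%:R * (P *m z) i 0.
Proof. by rewrite /active_rows -mulmxA mul_diag_mx mxE [_ 0 i]mxE. Qed.

Lemma active_rows_full x : vertex x -> row_full (active_rows x).
Proof.
move=> vx; apply: row_full_ker0 => z Dz0; apply: vx => i ai.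
by move: (active_rows_mulmx x z i); rewrite Dz0 ai mul1r mxE.
Qed.

Lemma vertex_basic_solution x : vertex x ->
  exists s, [/\ sorted ltn (map val s), rowsub (tnth s) P \in unitmx & x = basic_solution s].
Proof.
move=> vx; have full := active_rows_full vx; pose f := fullrankfun full.
have f_active j : active x (f j).
  apply: contraT => nact; have /row_free_inj f_free := fullrowsub_free full.
  have : delta_mx 0 j *m rowsub f (active_rows x) = 0 *m rowsub f (active_rows x) :> 'rV_n.
    rewrite mul0mx -rowE row_rowsub; apply/rowP => l.
    by rewrite mxE [RHS]mxE active_rowsE (negbTE nact) mul0r.
  move/f_free/matrixP/(_ 0 j); rewrite !mxE !eqxx => /eqP; by rewrite oner_eq0.
have Pf : rowsub f (active_rows x) = rowsub f P.
  by apply/matrixP => j l; rewrite [LHS]mxE [RHS]mxE active_rowsE f_active mul1r.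
have f_unit : rowsub f P \in unitmx by rewrite -Pf fullrowsub_unit.
have [s [sorted_s s_unit s_f]] := sorted_rowsub_unit (@fullrankfun_inj _ _ _ _ full) f_unit.
exists s; split => //; rewrite /basic_solution -{1}[x](mulKmx s_unit); congr (_ *m _).
apply/colP => j; rewrite rowsub_mulmx_entry [RHS]mxE.
by have /codomP [j' ->] := s_f j; apply/eqP/f_active.
Qed.

Lemma exists_dominating_basic_solution x : feasible x ->
  exists s, [/\ sorted ltn (map val s), rowsub (tnth s) P \in unitmx,
    feasible (basic_solution s) & objective x <= objective (basic_solution s)].
Proof.
move=> fx; have [v [fv xv vv]] := exists_dominating_vertex fx.
by have [s [ss us vE]] := vertex_basic_solution vv; exists s; rewrite -vE.
Qed.

Lemma exists_optimal_basis x0 : feasible x0 ->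
  exists s, [/\ sorted ltn (map val s), rowsub (tnth s) P \in unitmx, feasible (basic_solution s)
    & forall x, feasible x -> objective x <= objective (basic_solution s)].
Proof.
pose feasible_basis s := [&& sorted ltn (map val s), rowsub (tnth s) P \in unitmx
  & [forall i, (P *m basic_solution s) i 0 <= q i 0]].
have feasible_basisP s : sorted ltn (map val s) -> rowsub (tnth s) P \in unitmx ->
    feasible (basic_solution s) -> feasible_basis s.
  by move=> ss us fs; apply/and3P; split => //; apply/forallP.
move=> fx0; have [s0 [ss0 us0 fs0 _]] := exists_dominating_basic_solution fx0.
have [s /and3P [ss us /forallP fs] s_max] :=
  arg_maxP (fun s => objective (basic_solution s)) (feasible_basisP _ ss0 us0 fs0).
exists s; split => // x fx.
have [s' [ss' us' fs' xs']] := exists_dominating_basic_solution fx.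
exact: le_trans xs' (s_max s' (feasible_basisP _ ss' us' fs')).
Qed.

End LinearProgram.

Section CramerNumerators.
Variables (T : pzRingType) (p n : nat).
Variables (M : 'M[T]_(p, n)) (v : 'cV[T]_p) (u : 'rV[T]_n) (s : n.-tuple 'I_p).

Definition basis_det := \det (rowsub (tnth s) M).
Definition cramer_num := \adj (rowsub (tnth s) M) *m rowsub (tnth s) v.
Definition slack_num i := (M *m cramer_num) i 0 - basis_det * v i 0.
Definition value_num t := (u *m cramer_num) 0 0 - basis_det * t.
Definition basis_polys t := basis_det :: value_num t :: [seq slack_num i | i <- enum 'I_p].

Lemma size_basis_polys t : size (basis_polys t) = p.+2.
Proof. by rewrite /= size_map size_enum_ord. Qed.

Definition basis_sign_ok (S : numDomainType) (sgn : T -> S) t :=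
  [/\ sgn basis_det != 0, forall i, sgn (slack_num i) * sgn basis_det <= 0
    & 0 <= sgn (value_num t) * sgn basis_det].

Lemma basis_sign_ok_eq (S : numDomainType) (sgn sgn' : T -> S) t :
  {in basis_polys t, sgn =1 sgn'} -> basis_sign_ok sgn t -> basis_sign_ok sgn' t.
Proof.
move=> eq_sgn [det_ok slack_ok value_ok].
have eq_det : sgn basis_det = sgn' basis_det by rewrite eq_sgn ?mem_head.
split; first by rewrite -eq_det.
- by move=> i; rewrite -eq_det -eq_sgn // !inE map_f ?mem_enum ?orbT.
- by rewrite -eq_det -eq_sgn // !inE eqxx orbT.
Qed.
End CramerNumerators.

Section MapCramerNumerators.
Variables (aT rT : pzRingType) (f : {rmorphism aT -> rT}) (p n : nat).
Variables (M : 'M[aT]_(p, n)) (v : 'cV[aT]_p) (u : 'rV[aT]_n) (s : n.-tuple 'I_p).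
Local Notation "A ^f" := (map_mx f A) : ring_scope.

Lemma map_basis_det : f (basis_det M s) = basis_det M^f s.
Proof. by rewrite /basis_det -det_map_mx map_mxsub. Qed.

Lemma map_cramer_num : (cramer_num M v s)^f = cramer_num M^f v^f s.
Proof. by rewrite /cramer_num map_mxM map_mx_adj !map_mxsub. Qed.

Lemma map_slack_num i : f (slack_num M v s i) = slack_num M^f v^f s i.
Proof.
by rewrite /slack_num rmorphB rmorphM /= map_basis_det -map_cramer_num -map_mxM !mxE.
Qed.

Lemma map_value_num t : f (value_num M v u s t) = value_num M^f v^f u^f s (f t).
Proof.
by rewrite /value_num rmorphB rmorphM /= map_basis_det -map_cramer_num -map_mxM !mxE.
Qed.

Lemma basis_sign_ok_map (S : numDomainType) (sgn : rT -> S) t :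
  basis_sign_ok M v u s (sgn \o f) t <-> basis_sign_ok M^f v^f u^f s sgn (f t).
Proof.
rewrite /basis_sign_ok /= map_basis_det map_value_num.
by split=> -[det_ok slack_ok value_ok]; split=> // i; move: (slack_ok i); rewrite map_slack_num.
Qed.
End MapCramerNumerators.

Section BasicSolutionSign.
Variables (R : realFieldType) (n N : nat).
Variables (P : 'M[R]_(N, n)) (q : 'cV[R]_N) (w : 'rV[R]_n) (s : n.-tuple 'I_N).

Lemma basic_solution_cramer : rowsub (tnth s) P \in unitmx ->
  basic_solution P q s = (basis_det P s)^-1 *: cramer_num P q s.
Proof. by move=> us; rewrite /basic_solution /invmx us scalemxAl. Qed.

Lemma basic_solution_signP t :
  [/\ rowsub (tnth s) P \in unitmx, feasible P q (basic_solution P q s)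
    & t <= objective w (basic_solution P q s)] <-> basis_sign_ok P q w s Num.sg t.
Proof.
rewrite /basis_sign_ok sgr_eq0 unitmxE unitfE.
have entryE p (M : 'M[R]_(p, n)) i : basis_det P s != 0 ->
    (M *m basic_solution P q s) i 0 = (basis_det P s)^-1 * (M *m cramer_num P q s) i 0.
  by move=> d0; rewrite basic_solution_cramer ?unitmxE ?unitfE // -scalemxAr mxE.
split=> -[d0 fs os]; split=> //.
- by move=> i; rewrite sgr_subM_le0 // -entryE.
- by rewrite sgr_subM_ge0 // -(entryE _ w) //.
- by move=> i; rewrite entryE // -sgr_subM_le0 //; exact: fs.
- by rewrite /objective entryE // -sgr_subM_ge0.
Qed.
End BasicSolutionSign.

Section MpolySize.
Variables (R : idomainType) (nu : nat).
Implicit Types (p q : {mpoly R[nu]}) (a b D : nat).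

Lemma msizeM_leS p q a b : (msize p <= a.+1)%N -> (msize q <= b.+1)%N ->
  (msize (p * q) <= (a + b).+1)%N.
Proof.
have [->|p0] := eqVneq p 0; first by rewrite mul0r msize0.
have [->|q0] := eqVneq q 0; first by rewrite mulr0 msize0.
rewrite msizeM //; lia.
Qed.

Lemma msizeB_le p q D : (msize p <= D)%N -> (msize q <= D)%N -> (msize (p - q) <= D)%N.
Proof. by move=> hp hq; rewrite (leq_trans (msizeD_le _ _)) // msizeN geq_max hp hq. Qed.

Lemma msize_sum_le (I : finType) (F : I -> {mpoly R[nu]}) D :
  (forall i, msize (F i) <= D)%N -> (msize (\sum_i F i) <= D)%N.
Proof. by move=> hF; rewrite (leq_trans (msize_sum _ _ _)) //; apply/bigmax_leqP. Qed.

Lemma msize_prod_le n (F : 'I_n -> {mpoly R[nu]}) a :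
  (forall i, msize (F i) <= a.+1)%N -> (msize (\prod_i F i) <= (n * a).+1)%N.
Proof.
elim: n F => [|n IHn] F hF; first by rewrite big_ord0 msize1.
rewrite big_ord_recr mulSn addnC /=; apply: msizeM_leS (hF _).
exact: IHn.
Qed.

Lemma msize_sign (b : bool) : (msize ((-1) ^+ b : {mpoly R[nu]}) <= 1)%N.
Proof. by case: b; rewrite ?expr1 ?expr0 ?msizeN msize1. Qed.

Lemma msize_det_le n (M : 'M[{mpoly R[nu]}]_n) a :
  (forall i j, msize (M i j) <= a.+1)%N -> (msize (\det M) <= (n * a).+1)%N.
Proof.
move=> hM; apply: msize_sum_le => s; rewrite -(add0n (n * a)%N).
by apply: msizeM_leS; [exact: msize_sign | exact: msize_prod_le].
Qed.

Lemma msize_adj_le n (M : 'M[{mpoly R[nu]}]_n) a :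
  (forall i j, msize (M i j) <= a.+1)%N -> forall i j, (msize (\adj M i j) <= (n.-1 * a).+1)%N.
Proof.
move=> hM i j; rewrite mxE /cofactor -signr_odd -(add0n (n.-1 * a)%N).
apply: msizeM_leS; first exact: msize_sign.
by apply: msize_det_le => k l; rewrite !mxE.
Qed.

Lemma msize_mulmx_le m n r (A : 'M[{mpoly R[nu]}]_(m, n)) (B : 'M_(n, r)) a b :
  (forall i j, msize (A i j) <= a.+1)%N -> (forall i j, msize (B i j) <= b.+1)%N ->
  forall i j, (msize ((A *m B) i j) <= (a + b).+1)%N.
Proof. by move=> hA hB i j; rewrite mxE; apply: msize_sum_le => l; exact: msizeM_leS. Qed.
End MpolySize.

Section StandardForm.
Variables (R : realType) (k m nu : nat).
Variables (c : 'I_k -> {mpoly R[nu]}) (A : 'I_m -> 'I_k -> {mpoly R[nu]})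
  (b : 'I_m -> {mpoly R[nu]}).
Local Notation n := (k + k)%N.
Local Notation N := (m + (k + k))%N.

Definition lp_mx : 'M[{mpoly R[nu]}]_(m, k) := \matrix_(i, j) A i j.
Definition lp_row : 'rV[{mpoly R[nu]}]_k := \row_j c j.

(* Variables x = (u, v) with y = u - v; constraints A u - A v <= b and - x <= 0. *)
Definition std_mx : 'M[{mpoly R[nu]}]_(N, n) := col_mx (row_mx lp_mx (- lp_mx)) (- 1%:M).
Definition std_rhs : 'cV[{mpoly R[nu]}]_N := col_mx (\col_i b i) 0.
Definition std_obj : 'rV[{mpoly R[nu]}]_n := row_mx lp_row (- lp_row).

Local Notation stdP th := (map_mx (meval th) std_mx).
Local Notation stdq th := (map_mx (meval th) std_rhs).
Local Notation stdw th := (map_mx (meval th) std_obj).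

Definition of_std (x : 'cV[R]_n) (j : 'I_k) : R := (usubmx x - dsubmx x) j 0.
Definition to_std (y : 'I_k -> R) : 'cV[R]_n := col_mx (\col_j (y j + `|y j|)) (\col_j `|y j|).

Lemma std_mx_mulmx th (x : 'cV[R]_n) :
  stdP th *m x = col_mx (map_mx (meval th) lp_mx *m (usubmx x - dsubmx x)) (- x).
Proof.
rewrite map_col_mx map_row_mx !map_mxN map_mx1 mul_col_mx mulNmx mul1mx.
by rewrite -{1}(vsubmxK x) mul_row_col mulNmx mulmxBr.
Qed.

Lemma std_mx_inj th (z : 'cV[R]_n) : stdP th *m z = 0 -> z = 0.
Proof. by rewrite std_mx_mulmx => /eqP; rewrite col_mx_eq0 oppr_eq0 => /andP [_ /eqP]. Qed.

Lemma objective_std th (x : 'cV[R]_n) : objective (stdw th) x = lp_obj c th (of_std x).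
Proof.
rewrite /objective map_row_mx map_mxN -{1}(vsubmxK x) mul_row_col mulNmx -mulmxBr mxE.
by rewrite /lp_obj /of_std; apply: eq_bigr => j _; rewrite !mxE.
Qed.

Lemma of_to_std y j : of_std (to_std y) j = y j.
Proof. by rewrite /of_std col_mxKu col_mxKd !mxE addrK. Qed.

Lemma lp_feasible_of_std th (x : 'cV[R]_n) :
  feasible (stdP th) (stdq th) x -> lp_feasible A b th (of_std x).
Proof.
move=> fx i; move: (fx (lshift _ i)).
rewrite std_mx_mulmx map_col_mx !col_mxEu !mxE.
by congr (_ <= _); apply: eq_bigr => j _; rewrite /of_std !mxE.
Qed.

Lemma feasible_to_std th y :
  lp_feasible A b th y -> feasible (stdP th) (stdq th) (to_std y).
Proof.
move=> fy i; rewrite std_mx_mulmx map_col_mx -(splitK i); case: (split i) => [i'|j] /=.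
- rewrite !col_mxEu !mxE; move: (fy i').
  by congr (_ <= _); apply: eq_bigr => j _; rewrite -[in LHS]of_to_std /of_std !mxE.
- rewrite !col_mxEd map_mx0 [X in _ <= X]mxE mxE oppr_le0 -(splitK j).
  case: (split j) => [j'|j'] /=; rewrite ?col_mxEu ?col_mxEd mxE //.
  by have := ler_norm (- y j'); rewrite normrN; lra.
Qed.

Lemma lp_value_std th : lp_value c A b th =
  sup [set objective (stdw th) x | x in feasible (stdP th) (stdq th)].
Proof.
congr sup; apply/seteqP; split => _ [z fz <-].
- exists (to_std z); first exact: feasible_to_std.
  by rewrite objective_std; apply: eq_bigr => j _; rewrite of_to_std.
- by exists (of_std z); [exact: lp_feasible_of_std | rewrite objective_std].
Qed.

Lemma lp_value_ge_iff th t : lp_feasible_bounded c A b th ->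
  t <= lp_value c A b th <->
  exists2 s : n.-tuple 'I_N, sorted ltn (map val s) &
    basis_sign_ok std_mx std_rhs std_obj s (Num.sg \o meval th) t%:MP.
Proof.
move=> [[y0 fy0] [M ubM]]; rewrite lp_value_std.
set E := (X in sup X).
have objM x : feasible (stdP th) (stdq th) x -> objective (stdw th) x <= M.
  by move=> fx; rewrite objective_std; exact/ubM/lp_feasible_of_std.
have E_ub : has_ubound E by exists M => _ [x fx <-]; exact: objM.
have [s [ss us fs s_opt]] :=
  exists_optimal_basis (@std_mx_inj th) (ex_intro _ M objM) (feasible_to_std fy0).
split => [t_le | [s' ss' /(basis_sign_ok_map (meval th))]].
- exists s => //; apply/(basis_sign_ok_map (meval th)) => /=; rewrite mevalC.
  apply/basic_solution_signP; split => //; apply: le_trans t_le _.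
  apply: ge_sup => [|_ [x fx <-]]; last exact: s_opt.
  by exists (objective (stdw th) (to_std y0)), (to_std y0) => //; exact: feasible_to_std.
- rewrite /= mevalC => /basic_solution_signP [_ fs' ts'].
  by apply: le_trans ts' _; apply: ub_le_sup => //; exists (basic_solution (stdP th) (stdq th) s').
Qed.

Section Degree.
Variable d : nat.
Hypothesis hc : forall j, (msize (c j) <= d.+1)%N.
Hypothesis hA : forall i j, (msize (A i j) <= d.+1)%N.
Hypothesis hb : forall i, (msize (b i) <= d.+1)%N.

Lemma std_mx_msize i j : (msize (std_mx i j) <= d.+1)%N.
Proof.
rewrite mxE; case: (split i) => i'; rewrite !mxE.
- by case: (split j) => j'; rewrite !mxE ?msizeN.
- by rewrite msizeN; case: (_ == _); rewrite ?msize1 ?msize0.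
Qed.

Lemma std_rhs_msize i j : (msize (std_rhs i j) <= d.+1)%N.
Proof. by rewrite mxE; case: (split i) => i'; rewrite !mxE ?msize0. Qed.

Lemma std_obj_msize i j : (msize (std_obj i j) <= d.+1)%N.
Proof. by rewrite mxE; case: (split j) => j'; rewrite !mxE ?msizeN. Qed.

Lemma basis_polys_msize (k_gt0 : (0 < k)%N) s t p :
  p \in basis_polys std_mx std_rhs std_obj s t%:MP -> (msize p <= (n.+1 * d).+1)%N.
Proof.
have hPs i j : (msize (rowsub (tnth s) std_mx i j) <= d.+1)%N by rewrite mxE std_mx_msize.
have hdet : (msize (basis_det std_mx s) <= (n * d).+1)%N := msize_det_le hPs.
have hnum i j : (msize (cramer_num std_mx std_rhs s i j) <= (n * d).+1)%N.
  have -> : (n * d = n.-1 * d + d)%N by rewrite -mulSnr prednK // addn_gt0 k_gt0.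
  by apply: msize_mulmx_le (msize_adj_le hPs) _ i j => i' j'; rewrite mxE std_rhs_msize.
have hdetM x : (msize x <= d.+1)%N -> (msize (basis_det std_mx s * x) <= (n.+1 * d).+1)%N.
  by rewrite mulSnr; exact: msizeM_leS.
rewrite !in_cons => /or3P [/eqP -> | /eqP -> | /mapP [i _ ->]].
- by apply: leq_trans hdet _; rewrite ltnS leq_mul2r leqnSn orbT.
- apply: msizeB_le; last by apply: hdetM; rewrite msizeC; case: (_ != _).
  by rewrite mulSn; apply: msize_mulmx_le hnum 0 0; exact: std_obj_msize.
- apply: msizeB_le; last exact/hdetM/std_rhs_msize.
  by rewrite mulSn; apply: msize_mulmx_le hnum i 0; exact: std_mx_msize.
Qed.
End Degree.
End StandardForm.

Theorem lemma1 (R : realType) (k m nu d : nat) (t : R)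
  (hk : (0 < k)%N) (hm : (0 < m)%N) (hnu : (0 < nu)%N) (hd : (0 < d)%N)
  (c : 'I_k -> {mpoly R[nu]}) (A : 'I_m -> 'I_k -> {mpoly R[nu]})
  (b : 'I_m -> {mpoly R[nu]})
  (hc : forall j, (msize (c j) <= d.+1)%N)
  (hA : forall i j, (msize (A i j) <= d.+1)%N)
  (hb : forall i, (msize (b i) <= d.+1)%N)
  (hfb : forall theta : 'I_nu -> R, lp_feasible_bounded c A b theta) :
  exists ps : seq {mpoly R[nu]},
    [/\ (size ps <= 'C(m + 2 * k, 2 * k) * (m + 2 * k + 2))%N,
        (forall p, p \in ps -> (msize p <= (2 * k + 1) * d + 1)%N) &
        (forall theta theta' : 'I_nu -> R,
           (forall p, p \in ps -> Num.sg p.@[theta] = Num.sg p.@[theta']) ->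
           (t <= lp_value c A b theta <-> t <= lp_value c A b theta'))].
Proof.
pose bases := [set s : (k + k).-tuple 'I_(m + (k + k)) | sorted ltn (map val s)].
pose polys s := basis_polys (std_mx A) (std_rhs k b) (std_obj c) s t%:MP.
have two_k : (2 * k = k + k)%N by rewrite mul2n addnn.
exists (flatten [seq polys s | s <- enum bases]); split.
- rewrite size_flatten /shape -map_comp sumnE big_map.
  rewrite (eq_bigr (fun=> (m + (k + k)).+2)) => [|s _]; last exact: size_basis_polys.
  by rewrite big_const_seq count_predT -cardE iter_addn_0 card_ltn_sorted_tuples two_k mulnC addn2.
- move=> p /flattenP [_ /mapP [s _ ->]] /(basis_polys_msize hc hA hb hk).
  by rewrite two_k !addn1.
- move=> th th' same_sg; rewrite !lp_value_ge_iff //.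
  have same_on s p : s \in bases -> p \in polys s -> Num.sg p.@[th] = Num.sg p.@[th'].
    move=> s_bases p_s; apply: same_sg; apply/flattenP.
    by exists (polys s); rewrite ?map_f ?mem_enum.
  split=> -[s sorted_s ok]; exists s => //; move: ok; apply: basis_sign_ok_eq => p p_s /=;
    by rewrite (same_on s) ?inE.
Qed.
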